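(* Consider Algorithm PDFPM (described in the context) applied to $\min_x F(x)$, and let $\bar{x}^k$ be the point computed in Step 2 at some iteration $k$ with current parameter $\sigma_k$. Suppose Assumptions A1, A2 and A3 (described in the context) hold. If $\sigma_k\|\bar{x}^k-x^k\|\ge\epsilon$, then for every $j\in\mathcal{J}$, $$F_j(\bar{x}^k)\le F_j(x^k)-\Big(\frac{\sigma_k-5L_j-\overline{B}}{2}\Big)\|s^k\|^2+\frac{4^{\beta_j}n^{\frac{1-\beta_j}{2}}M_j+M_j}{\beta_j+1}\|s^k\|^{\beta_j+1},$$ where $s^k=\bar{x}^k-x^k$.
   Context: Setting: $m,n\ge1$, $\mathcal{J}=\{1,\dots,m\}$, $F=(F_1,\dots,F_m)$ with $F_j=f_j+h_j$, where $f_j:\mathbb{R}^n\to\mathbb{R}$ is differentiable and $h_j:\mathbb{R}^n\to\mathbb{R}\cup\{+\infty\}$ is convex. For each $j$ a map $g_{f_j}:\mathbb{R}^n\times[0,1]\to\mathbb{R}^n$ is given with $\lim_{\lambda\to0}g_{f_j}(x,\lambda)=\nabla f_j(x)$ (a gradient approximation, e.g. finite differences). $\|\cdot\|$ is the Euclidean norm (spectral norm for matrices). Algorithm PDFPM: choose $x^0\in\mathbb{R}^n$, $\alpha,\epsilon\in(0,1)$, $\sigma_0\ge1$, symmetric positive semidefinite $B_j^0\in\mathbb{R}^{n\times n}$; set $k=0$. Step 1: choose $0<\lambda_k\le \epsilon/(\sigma_k\sqrt n)$ and compute $g_{f_j}(x^k,\lambda_k)$ for each $j$. Step 2: let $\bar{x}^k$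 be the (unique) minimizer of $\Phi_{x^k}(x)+\frac{\sigma_k}{2}\|x-x^k\|^2$, where $\Phi_{x^k}(x)=\max_{j\in\mathcal{J}}[\langle g_{f_j}(x^k,\lambda_k)+\frac12B_j^k(x-x^k),x-x^k\rangle+h_j(x)-h_j(x^k)]$. Step 3: if $\sigma_k\|\bar{x}^k-x^k\|\ge\epsilon$ go to Step 4; otherwise stop. Step 4: if $F_j(\bar{x}^k)\le F_j(x^k)-\frac{\alpha\epsilon^2}{2\sigma_k}$ for all $j\in\mathcal{J}$, set $x^{k+1}=\bar{x}^k$, $\sigma_{k+1}=\sigma_k$, choose symmetric positive semidefinite $B_j^{k+1}$, set $k\leftarrow k+1$ and go to Step 1; otherwise replace $\sigma_k$ by $2\sigma_k$ and go to Step 1 (same $k$). Assumption A1: there is $\overline{B}\ge0$ with $\|B_j^k\|\le\overline{B}$ for all iterations $k$ and all $j\in\mathcal{J}$. Assumption A2: for each $j$ there are $L_j,M_j>0$ and $\beta_j\in(0,1]$ with $f_j(y)\le f_j(x)+\langle\nabla f_j(x),y-x\rangle+\frac{L_j}{2}\|y-x\|^2+\frac{M_j}{\beta_j+1}\|y-x\|^{\beta_j+1}$ for all $x,y\in\mathbb{R}^n$. Assumption A3: with the same $L_j,M_j,\beta_j$, $\|\nabla f_j(x)-g_{f_j}(x,\lambda)\|\le\lambda\frac{\sqrt n L_j}{2}+\sqrt n\frac{M_j}{\beta_j+1}\lambda^{\beta_j}$ for all $x$ and all $\lambda\in(0,1]$. *)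

From HB Require Import structures.
From mathcomp Require Import all_boot all_order all_algebra.
From mathcomp Require Import all_classical all_reals all_analysis.
Set Implicit Arguments. Unset Strict Implicit. Unset Printing Implicit Defensive.
Import Order.TTheory GRing.Theory Num.Theory.
Import numFieldNormedType.Exports.
Local Open Scope classical_set_scope.
Local Open Scope ring_scope.

Section PDFPM.
Variable R : realType.

Definition dotv (n : nat) (u v : 'cV[R]_n) : R := \sum_(i < n) u i 0 * v i 0.

Definition enorm (n : nat) (u : 'cV[R]_n) : R := Num.sqrt (dotv u u).

Definition specnorm (n : nat) (B : 'M[R]_n) : R :=
  sup [set enorm (B *m v) | v in [set v : 'cV[R]_n | enorm v <= 1]].

Definition grad (n : nat) (f : 'cV[R]_n -> R) (x : 'cV[R]_n) : 'cV[R]_n :=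
  \col_(i < n) derive f x (delta_mx i 0 : 'cV[R]_n).

Definition sym_psd (n : nat) (B : 'M[R]_n) : Prop :=
  B^T = B /\ forall v : 'cV[R]_n, 0 <= dotv v (B *m v).

Definition convex_ext (n : nat) (h : 'cV[R]_n -> \bar R) : Prop :=
  (forall x, h x != -oo%E) /\
  forall (x y : 'cV[R]_n) (t : R), 0 <= t <= 1 ->
    (h (t *: x + (1 - t) *: y)%R <= t%:E * h x + (1 - t)%:E * h y)%E.

(* the model function Phi_{x^k} of Step 2, with g j = g_{f_j}(x^k, lambda_k) *)
Definition Phi (m n : nat) (g : 'I_m -> 'cV[R]_n) (B : 'I_m -> 'M[R]_n)
  (h : 'I_m -> 'cV[R]_n -> \bar R) (xk x : 'cV[R]_n) : \bar R :=
  (\big[maxe/-oo]_(j < m)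
     ((dotv (g j + 2^-1 *: (B j *m (x - xk)))%R (x - xk)%R)%:E + (h j x - h j xk)))%E.

End PDFPM.

From HB Require Import structures.
From mathcomp Require Import all_boot all_order all_algebra.
From mathcomp Require Import all_classical all_reals all_analysis.
From mathcomp Require Import ring lra.
Set Implicit Arguments.
Unset Strict Implicit.
Unset Printing Implicit Defensive.
Import Order.TTheory GRing.Theory Num.Theory.
Import numFieldNormedType.Exports.
Local Open Scope classical_set_scope.
Local Open Scope ring_scope.

(** Comparing the proximal subproblem at [xbar] with its value at [x^k] gives,
  for every [j], [<g_j, s> + 1/2 <B_j s, s> + h_j(xbar) - h_j(x^k) <= -sigma/2 |s|^2].
  Replacing the approximate gradient [g_j] by [grad f_j] costs
  [|grad f_j - g_j| |s|] (Cauchy-Schwarz); by A3 and the stepsize rule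
  [lambda sqrt n <= eps/sigma <= |s|] this is at most
  [L_j/2 |s|^2 + n^((1-beta_j)/2) M_j/(beta_j+1) |s|^(beta_j+1)].
  Adding the descent inequality A2 and dropping [<B_j s, s> >= 0] yields the
  claim with room to spare in both constants. *)

Section EuclideanSpace.
Variables (R : realType) (n : nat).
Implicit Types u v w : 'cV[R]_n.

Lemma dotvC u v : dotv u v = dotv v u.
Proof. by apply: eq_bigr => i _; rewrite mulrC. Qed.

Lemma dotvDl u v w : dotv (u + v) w = dotv u w + dotv v w.
Proof. by rewrite /dotv -big_split; apply: eq_bigr => i _; rewrite mxE mulrDl. Qed.

Lemma dotvZl (c : R) u w : dotv (c *: u) w = c * dotv u w.
Proof. by rewrite /dotv mulr_sumr; apply: eq_bigr => i _; rewrite mxE mulrA. Qed.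

Lemma dotvBl u v w : dotv (u - v) w = dotv u w - dotv v w.
Proof. by rewrite dotvDl -scaleN1r dotvZl mulN1r. Qed.

Lemma dotv0r u : dotv u 0 = 0.
Proof. by rewrite /dotv big1 // => i _; rewrite mxE mulr0. Qed.

Lemma dotvv_ge0 u : 0 <= dotv u u.
Proof. by apply: sumr_ge0 => i _; rewrite -expr2 sqr_ge0. Qed.

Lemma dotvvE u : dotv u u = enorm u ^+ 2.
Proof. by rewrite /enorm sqr_sqrtr // dotvv_ge0. Qed.

Lemma enorm_ge0 u : 0 <= enorm u.
Proof. exact: sqrtr_ge0. Qed.

Lemma enorm0 : enorm (0 : 'cV[R]_n) = 0.
Proof. by rewrite /enorm dotv0r sqrtr0. Qed.

Lemma enorm_eq0 u : (enorm u == 0) = (u == 0).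
Proof.
apply/idP/eqP => [|->]; last by rewrite enorm0.
rewrite sqrtr_eq0 => uu_le0.
have uu0 : dotv u u = 0 by apply/eqP; rewrite eq_le uu_le0 dotvv_ge0.
apply/matrixP => i k; rewrite ord1 mxE.
have /eqP : u i 0 * u i 0 = 0.
  by apply: (psumr_eq0P _ uu0) => // l _; rewrite -expr2 sqr_ge0.
by rewrite mulf_eq0 orbb => /eqP.
Qed.

Lemma dotv_le_enorm u v : dotv u v <= enorm u * enorm v.
Proof.
have [->|v0] := eqVneq v 0; first by rewrite dotv0r enorm0 mulr0.
have v_gt0 : 0 < enorm v by rewrite lt_def enorm_eq0 v0 enorm_ge0.
set c := dotv u v / enorm v ^+ 2.
have cE : dotv u v = c * enorm v ^+ 2 by rewrite divfK // expf_neq0 // gt_eqF.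
have := dotvv_ge0 (u - c *: v).
rewrite dotvBl !dotvZl !(dotvC _ (u - c *: v)) !dotvBl !dotvZl !dotvvE (dotvC v u) cE.
set a := enorm u; set b := enorm v in v_gt0 * => uc_ge0.
have a0 : 0 <= a := enorm_ge0 u.
have cb_le : c * b <= a.
  have : (c * b) ^+ 2 <= a ^+ 2 by lra.
  nra.
by rewrite expr2 mulrA ler_pM2r.
Qed.

End EuclideanSpace.

Section ProximalModel.
Variables (R : realType) (m n : nat) (g : 'I_m -> 'cV[R]_n) (B : 'I_m -> 'M[R]_n).
Variables (h : 'I_m -> 'cV[R]_n -> \bar R) (xk : 'cV[R]_n).
Local Notation Phi := (Phi g B h xk).

Lemma Phi_ge j x :
  ((dotv (g j + 2^-1 *: (B j *m (x - xk))) (x - xk))%:E + (h j x - h j xk) <= Phi x)%E.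
Proof. exact: le_bigmax. Qed.

Lemma Phi_center_le0 : (forall j, h j xk \is a fin_num) -> (Phi xk <= 0)%E.
Proof.
move=> h_fin; apply: bigmax_le => // j _.
by rewrite subrr dotv0r subee ?h_fin // adde0.
Qed.

Variables (sigma : R) (xbar : 'cV[R]_n).
Hypothesis h_fin : forall j, h j xk \is a fin_num.
Hypothesis xbar_min : forall x,
  (Phi xbar + (sigma / 2 * enorm (xbar - xk) ^+ 2)%:E
   <= Phi x + (sigma / 2 * enorm (x - xk) ^+ 2)%:E)%E.

Lemma prox_model_le j :
  ((dotv (g j + 2^-1 *: (B j *m (xbar - xk))) (xbar - xk))%:E
     + (h j xbar - h j xk) <= (- (sigma / 2 * enorm (xbar - xk) ^+ 2))%:E)%E.
Proof.
apply: le_trans (Phi_ge j xbar) _.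
have := xbar_min xk; rewrite subrr enorm0 expr0n /= mulr0 adde0.
move=> /le_trans/(_ (Phi_center_le0 h_fin)) Phi_xbar_le.
by rewrite -sube_le0 EFinN oppeK.
Qed.

Lemma prox_fin_num j : (forall x, h j x != -oo)%E -> h j xbar \is a fin_num.
Proof.
move=> /(_ xbar); have := prox_model_le j.
by rewrite -(fineK (h_fin j)); case: (h j xbar).
Qed.

End ProximalModel.

Section InexactGradient.
Variable R : realType.

Lemma powR_ge1 (a b : R) : 1 <= a -> 0 <= b -> 1 <= a `^ b.
Proof. by move=> a1 b0; rewrite -[leLHS](powRr0 a) ler_powR. Qed.

Lemma sqrt_mul_powR_le (a lambda d b : R) :
  0 <= a -> 0 <= lambda -> 0 <= b -> lambda * Num.sqrt a <= d ->
  Num.sqrt a * lambda `^ b <= a `^ ((1 - b) / 2) * d `^ b.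
Proof.
move=> a0 lambda0 b0 lambda_d.
have sqrt_a0 := sqrtr_ge0 a.
have -> : Num.sqrt a = Num.sqrt a `^ (1 - b) * Num.sqrt a `^ b.
  by rewrite -powRD ?subrK ?powRr1 ?oner_eq0.
have -> : Num.sqrt a `^ (1 - b) = a `^ ((1 - b) / 2).
  by rewrite -powR12_sqrt // -powRrM mulrC.
rewrite -mulrA -powRM //.
apply: ler_wpM2l; first exact: powR_ge0.
apply: ge0_ler_powR; rewrite ?nnegrE ?mulr_ge0 // 1?mulrC //.
exact: le_trans (mulr_ge0 lambda0 sqrt_a0) lambda_d.
Qed.

Lemma inexact_gradient_error_le (a L K b lambda d e : R) :
  0 <= a -> 0 <= L -> 0 <= K -> 0 <= lambda -> 0 <= b -> lambda * Num.sqrt a <= d ->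
  e <= lambda * (Num.sqrt a * L / 2) + Num.sqrt a * K * lambda `^ b ->
  e * d <= L / 2 * d ^+ 2 + a `^ ((1 - b) / 2) * K * d `^ (b + 1).
Proof.
move=> a0 L0 K0 lambda0 b0 lambda_d e_le.
have d0 : 0 <= d := le_trans (mulr_ge0 lambda0 (sqrtr_ge0 a)) lambda_d.
have pow_le := sqrt_mul_powR_le a0 lambda0 b0 lambda_d.
rewrite powRD ?powRr1 ?(gt_eqF (ltr_wpDl b0 ltr01)) //.
apply: le_trans (ler_wpM2r d0 e_le) _.
have t1 : lambda * Num.sqrt a * (L / 2 * d) <= d * (L / 2 * d).
  by rewrite ler_wpM2r ?mulr_ge0 ?invr_ge0.
have t2 : Num.sqrt a * lambda `^ b * (K * d) <= a `^ ((1 - b) / 2) * d `^ b * (K * d).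
  by rewrite ler_wpM2r ?mulr_ge0.
lra.
Qed.

Lemma descent_inexact_gradient n (f : 'cV[R]_n -> R) (G g x y : 'cV[R]_n)
    (a L K b lambda : R) :
  0 <= a -> 0 <= L -> 0 <= K -> 0 <= lambda -> 0 <= b ->
  lambda * Num.sqrt a <= enorm (y - x) ->
  f y <= f x + dotv G (y - x) + L / 2 * enorm (y - x) ^+ 2
         + K * enorm (y - x) `^ (b + 1) ->
  enorm (G - g) <= lambda * (Num.sqrt a * L / 2) + Num.sqrt a * K * lambda `^ b ->
  f y <= f x + dotv g (y - x) + L * enorm (y - x) ^+ 2
         + (a `^ ((1 - b) / 2) * K + K) * enorm (y - x) `^ (b + 1).
Proof.
move=> a0 L0 K0 lambda0 b0 lambda_d descent G_err.
have err := inexact_gradient_error_le a0 L0 K0 lambda0 b0 lambda_d G_err.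
have CS := dotv_le_enorm (G - g) (y - x).
rewrite dotvBl in CS.
have := enorm_ge0 (y - x); lra.
Qed.

Lemma stepsize_le (a eps sigma lambda d : R) :
  1 <= a -> eps < 1 -> 1 <= sigma -> 0 < lambda <= eps / (sigma * a) ->
  eps <= sigma * d -> lambda * a <= d /\ 0 < lambda <= 1.
Proof.
move=> a1 eps1 sigma1 /andP[lambda0 lambda_le] eps_le.
have sigma_a1 : 1 <= sigma * a by rewrite mulr_ege1.
rewrite ler_pdivlMr ?(lt_le_trans ltr01 sigma_a1) // in lambda_le.
split; last by rewrite lambda0; nra.
by rewrite -(ler_pM2l (lt_le_trans ltr01 sigma1)); nra.
Qed.

End InexactGradient.

Theorem lemma3 (R : realType) (m n : nat)
  (f : 'I_m -> 'cV[R]_n -> R) (h : 'I_m -> 'cV[R]_n -> \bar R)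
  (gf : 'I_m -> 'cV[R]_n -> R -> 'cV[R]_n)
  (L M beta : 'I_m -> R) (Bbar alpha eps sigma lambda : R)
  (B : 'I_m -> 'M[R]_n) (xk xbar : 'cV[R]_n) :
  (0 < m)%N -> (0 < n)%N ->
  (* standing setting *)
  (forall j x, differentiable (f j) x) ->
  (forall j, convex_ext (h j)) ->
  (forall j x, gf j x t @[t --> 0^'+] --> grad (f j) x) ->
  (* parameters of PDFPM at the current iteration *)
  0 < alpha < 1 -> 0 < eps < 1 -> 1 <= sigma ->
  0 < lambda <= eps / (sigma * Num.sqrt n%:R) ->
  (forall j, sym_psd (B j)) ->
  (forall j, h j xk \is a fin_num) ->
  (* Step 2: xbar minimizes Phi_{x^k}(x) + sigma/2 ||x - x^k||^2 *)
  (forall x, (Phi (fun j => gf j xk lambda) B h xk xbar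
                + (sigma / 2 * enorm (xbar - xk) ^+ 2)%:E
              <= Phi (fun j => gf j xk lambda) B h xk x
                + (sigma / 2 * enorm (x - xk) ^+ 2)%:E)%E) ->
  (* A1 *)
  0 <= Bbar -> (forall j, specnorm (B j) <= Bbar) ->
  (* A2 *)
  (forall j, 0 < L j /\ 0 < M j /\ 0 < beta j <= 1) ->
  (forall j x y, f j y <= f j x + dotv (grad (f j) x) (y - x)
        + L j / 2 * enorm (y - x) ^+ 2
        + M j / (beta j + 1) * enorm (y - x) `^ (beta j + 1)) ->
  (* A3 *)
  (forall j x lam, 0 < lam <= 1 ->
     enorm (grad (f j) x - gf j x lam)
       <= lam * (Num.sqrt n%:R * L j / 2)
          + Num.sqrt n%:R * (M j / (beta j + 1)) * lam `^ beta j) ->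
  (* Step 3 test *)
  eps <= sigma * enorm (xbar - xk) ->
  forall j : 'I_m,
    ((f j xbar)%:E + h j xbar
     <= (f j xk)%:E + h j xk
        - ((sigma - 5 * L j - Bbar) / 2 * enorm (xbar - xk) ^+ 2)%:E
        + ((4 `^ beta j * n%:R `^ ((1 - beta j) / 2) * M j + M j) / (beta j + 1)
             * enorm (xbar - xk) `^ (beta j + 1))%:E)%E.
Proof.
move=> _ n_gt0 _ h_convex _ _ /andP[_ eps1] sigma1 lambda_le B_psd.
move=> h_fin xbar_min Bbar0 _ LMbeta A2 A3 step_test j.
have [L0 [M0 /andP[beta0 _]]] := LMbeta j.
set s := xbar - xk in xbar_min step_test *.
have sqrt_n1 : 1 <= Num.sqrt (n%:R : R).
  by rewrite -[leLHS](sqrtr1 R) ler_sqrt // ler1n.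
have [lambda_s lambda01] := stepsize_le sqrt_n1 eps1 sigma1 lambda_le step_test.
have K0 : 0 <= M j / (beta j + 1) by apply: divr_ge0; lra.
have /andP[lambda0 _] := lambda01.
have smooth := descent_inexact_gradient (ler0n _ n) (ltW L0) K0 (ltW lambda0)
  (ltW beta0) lambda_s (A2 j xk xbar) (A3 j xk lambda lambda01).
have model := prox_model_le h_fin xbar_min j.
rewrite -/s -(fineK (prox_fin_num h_fin xbar_min (h_convex j).1)) -(fineK (h_fin j)) in model *.
rewrite -EFinB -EFinD lee_fin in model.
rewrite -EFinD -EFinB -EFinD lee_fin.
have Bs_ge0 : 0 <= dotv (B j *m s) s by rewrite dotvC; exact: (B_psd j).2.
rewrite dotvDl dotvZl in model; rewrite -/s in smooth.
have four_pow1 : 1 <= 4 `^ beta j by rewrite powR_ge1 ?ler1n ?ltW.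
set P := n%:R `^ _ in smooth *; set K := M j / _ in smooth K0.
set D := enorm s `^ _ in smooth *.
have -> : (4 `^ beta j * P * M j + M j) / (beta j + 1) * D
          = 4 `^ beta j * (P * K * D) + K * D by rewrite /K; ring.
have PKD0 : 0 <= P * K * D := mulr_ge0 (mulr_ge0 (powR_ge0 _ _) K0) (powR_ge0 _ _).
have Ls0 : 0 <= L j * enorm s ^+ 2 by rewrite mulr_ge0 ?sqr_ge0 ?ltW.
have Bbar_s0 : 0 <= Bbar * enorm s ^+ 2 by rewrite mulr_ge0 ?sqr_ge0.
nra.
Qed.
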